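(* Let $n\in\mathbb N$ and $X$ a partial order. For all $s\in\mathbb{T}_{n+1}^-(X)$ and all $t\in\mathbb{T}_n(\mathbb{T}_{n+1}^-(X))$ we have $$s\leq_{\mathbb{T}_{n+1}(X)}\pi^n_X(t)\iff s\leq^{\mathrm{fin}}_{\mathbb{T}_{n+1}^-(X)}\operatorname{supp}^{\mathbb{T}_n}_{\mathbb{T}_{n+1}^-(X)}(t),$$ i.e. iff there is $t'\in\operatorname{supp}^{\mathbb{T}_n}_{\mathbb{T}_{n+1}^-(X)}(t)$ with $s\leq_{\mathbb{T}_{n+1}^-(X)}t'$.
   Context: For a partial order $X$, $M(X)$ is the set of finite multisets $[x_0,\dots,x_{m-1}]$ with elements from $X$, ordered by $[x_0,\dots,x_{m-1}]\leq_{M(X)}[y_0,\dots,y_{k-1}]$ iff there is an injection $g$ with $x_i\leq_X y_{g(i)}$ for all $i<m$. For $n\in\mathbb N$ and a partial order $X$, $\mathbb{T}_n(X)$ is generated by: $\overline x$ for each $x\in X$; $i\star\sigma$ for each $\sigma=[t_0,\dots,t_{m-1}]\in M(\mathbb{T}_n(X))$ and $i<n$. For $n>0$, $\mathbb{T}_n^-(X)=\{\overline x\mid x\in X\}\cup\{0\star\sigma\mid\sigma\in M(\mathbb{T}_n(X))\}\subseteq\mathbb{T}_n(X)$. The partial order $\leq_{\mathbb{T}_n(X)}$ is defined recursively: $\overline x\leq t$ iff either $t=\overline y$ with $x\leq_X y$, or $t=j\star[t_0,\dots,t_{m-1}]$ and $\overline x\leq t_l$ for some $l<m$; $i\star\sigma\leq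 t$ iff either $t=i\star\tau$ with $\sigma\leq_{M(\mathbb{T}_n(X))}\tau$, or $t=j\star[t_0,\dots,t_{m-1}]$ with $j\geq i$ and $i\star\sigma\leq t_l$ for some $l<m$; $\leq_{\mathbb{T}_n^-(X)}$ is its restriction. Supports: $\operatorname{supp}^{\mathbb{T}_n}_X(\overline x)=\{x\}$, $\operatorname{supp}^{\mathbb{T}_n}_X(i\star[t_0,\dots,t_{m-1}])=\bigcup_{l<m}\operatorname{supp}^{\mathbb{T}_n}_X(t_l)$. For finite $b\subseteq Z$, $s\leq^{\mathrm{fin}}_Z b$ means $s\leq_Z y$ for some $y\in b$. The map $\pi^n_X:\mathbb{T}_n(\mathbb{T}_{n+1}^-(X))\to\mathbb{T}_{n+1}(X)$ is defined recursively by $\pi^n_X(\overline t)=t$ (for $t\in\mathbb{T}_{n+1}^-(X)\subseteq\mathbb{T}_{n+1}(X)$) and $\pi^n_X(i\star[s_0,\dots,s_{m-1}])=(i+1)\star[\pi^n_X(s_0),\dots,\pi^n_X(s_{m-1})]$. *)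

From Stdlib Require List.
From mathcomp Require Import all_boot all_order.
Set Implicit Arguments. Unset Strict Implicit. Unset Printing Implicit Defensive.

(* Terms of T_n(X): leaves  \overline x  and nodes  i * [t_0,...,t_{m-1}]
   with i < n.  Finite multisets are represented by lists; the multiset
   order below only depends on the multiset (it is defined via injections). *)
Inductive tree (n : nat) (X : Type) : Type :=
| Leaf : X -> tree n X
| Node : 'I_n -> seq (tree n X) -> tree n X.
Arguments Leaf {n X}.
Arguments Node {n X}.

Definition mset_le (Z : Type) (R : Z -> Z -> Prop) (s t : seq Z) : Prop :=
  exists g : 'I_(size s) -> 'I_(size t),
    injective g /\
    forall i : 'I_(size s), R (tnth (in_tuple s) i) (tnth (in_tuple t) (g i)).

Inductive tle (n : nat) (X : Type) (R : X -> X -> Prop) : tree n X -> tree n X -> Prop :=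
| tle_leaf_leaf (x y : X) : R x y -> tle R (Leaf x) (Leaf y)
| tle_leaf_node (x : X) (j : 'I_n) (ts : seq (tree n X)) (t : tree n X) :
    List.In t ts -> tle R (Leaf x) t -> tle R (Leaf x) (Node j ts)
| tle_node_node (i : 'I_n) (ss ts : seq (tree n X)) :
    mset_le (tle R) ss ts -> tle R (Node i ss) (Node i ts)
| tle_node_sub (i j : 'I_n) (ss ts : seq (tree n X)) (t : tree n X) :
    i <= j -> List.In t ts -> tle R (Node i ss) t -> tle R (Node i ss) (Node j ts).

Definition is_minus (n : nat) (X : Type) (t : tree n.+1 X) : Prop :=
  match t with
  | Leaf _ => True
  | Node i _ => nat_of_ord i = 0
  end.

Definition tminus (n : nat) (X : Type) : Type := {t : tree n.+1 X | is_minus t}.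

Definition tminus_le (n : nat) (X : Type) (R : X -> X -> Prop)
  (a b : tminus n X) : Prop := tle R (proj1_sig a) (proj1_sig b).

Fixpoint supp (n : nat) (X : Type) (t : tree n X) : seq X :=
  match t with
  | Leaf x => [:: x]
  | Node _ ts => flatten (map (@supp n X) ts)
  end.

Definition fin_le (Z : Type) (R : Z -> Z -> Prop) (s : Z) (b : seq Z) : Prop :=
  exists y, List.In y b /\ R s y.

Fixpoint piT (n : nat) (X : Type) (t : tree n (tminus n X)) : tree n.+1 X :=
  match t with
  | Leaf s => proj1_sig s
  | Node i ts => Node (lift ord0 i) (map (@piT n X) ts)
  end.

From mathcomp Require Import all_boot all_order.

(* Since pi^n_X raises every node label by one, a tree of T^-_{n+1}(X)
   (a leaf or a node labelled 0) can only lie below a node of pi^n_X(t) by lying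
   below one of its children; by induction it lies below pi^n_X(t) exactly when it
   lies below one of the leaves of t, which are the elements of the support. *)

Definition tree_nested_ind (n : nat) (X : Type) (P : tree n X -> Prop)
  (HL : forall x, P (Leaf x))
  (HN : forall i ts, (forall u, List.In u ts -> P u) -> P (Node i ts)) :
  forall t, P t :=
  fix F t := match t as t0 return P t0 with
  | Leaf x => HL x
  | Node i ts => HN i ts
      ((fix G (l : seq (tree n X)) : forall u, List.In u l -> P u :=
         match l as l0 return forall u, List.In u l0 -> P u with
         | nil => fun u H => False_ind _ H
         | cons a r => fun u H => match H with
             | or_introl e => eq_rect a P (F a) u e
             | or_intror h => G r u h end
         end) ts)
  end.

Lemma In_flatten_map (A B : Type) (f : A -> seq B) (l : seq A) (y : B) :
  List.In y (flatten (map f l)) <-> exists x, List.In x l /\ List.In y (f x).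
Proof.
have -> : flatten (map f l) = List.flat_map f l by elim: l => //= a l ->.
exact: List.in_flat_map.
Qed.

Lemma fin_le_flatten_map (A Z : Type) (R : Z -> Z -> Prop) (f : A -> seq Z)
    (s : Z) (l : seq A) :
  fin_le R s (flatten (map f l)) <-> exists x, List.In x l /\ fin_le R s (f x).
Proof.
split.
- by case=> y [/In_flatten_map [x [xl yfx]] sy]; exists x; split => //; exists y.
- case=> x [xl [y [yfx sy]]]; exists y; split => //.
  by apply/In_flatten_map; exists x.
Qed.

Lemma tle_minus_Node (n : nat) (X : Type) (R : X -> X -> Prop)
    (s : tree n.+1 X) (j : 'I_n.+1) (us : seq (tree n.+1 X)) :
  is_minus s -> 0 < j ->
  tle R s (Node j us) <-> exists u, List.In u us /\ tle R s u.
Proof.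
move=> s_minus j_gt0; split.
- case: s s_minus => [x|i ss] /= s_minus h; inversion h; subst.
  + by exists t.
  + by move: j_gt0; rewrite s_minus.
  + by exists t.
- case=> u [uin su]; case: s s_minus su => [x|i ss] /= s_minus su.
  + exact: tle_leaf_node uin su.
  + by apply: tle_node_sub uin su; rewrite s_minus.
Qed.

Theorem lemma6p3 (n : nat) (d : Order.disp_t) (X : porderType d)
  (s : tminus n X) (t : tree n (tminus n X)) :
  tle (fun x y : X => (x <= y)%O) (proj1_sig s) (piT t) <->
  fin_le (tminus_le (fun x y : X => (x <= y)%O)) s (supp t).
Proof.
elim/tree_nested_ind: t => [s'|i ts IH] /=.
  by split=> [le_ss'|[y [[<-|[]] le_sy]]] //; exists s'; split; first left.
rewrite fin_le_flatten_map tle_minus_Node //; last exact: proj2_sig s.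
split=> [[v [/List.in_map_iff [u [<- uin]] le_su]]|[u [uin le_su]]].
- by exists u; split; last exact/IH.
- by exists (piT u); split; [apply/List.in_map_iff; exists u | exact/IH].
Qed.
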